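(* Let $X$ and $Y$ be random variables having the same support, and let $\mathbf{q}=(q_1,q_2)$, where $q_i:[0,1]\to[0,1]$, $i=1,2$, are distortion functions such that $\hat G_X(\mathbf q)$ and $\hat G_Y(\mathbf q)$ are finite. Then: 1. $\hat G_{X+\delta}(\mathbf q)=\hat G_X(\mathbf q)$ for all $\delta\in\mathbb{R}$; 2. $\hat G_{\gamma X}(\mathbf q)=\gamma\hat G_X(\mathbf q)$ for all $\gamma>0$; 3. $\hat G_X(\mathbf q)=0$ for any degenerate random variable $X$; 4. $\hat G_X(\mathbf q)\ge0$ for any random variable $X$; 5. $X\le_d Y$ implies $\hat G_X(\mathbf q)\le\hat G_Y(\mathbf q)$.
   Context: A distortion function is an increasing (non-strict) function $q:[0,1]\to[0,1]$ with $q(0)=0$ and $q(1)=1$. For a random variable $X$ with CDF $F$ and survival function $\overline F=1-F$, with $l=\inf\{x:F(x)>0\}$ and $r=\sup\{x:\overline F(x)>0\}$, the $\mathbf q$-distorted Gini function is $\hat G_X(\mathbf q)=\int_l^r q_1(F(x))\,q_2(\overline F(x))\,dx$. With $F^{-1}(u)=\sup\{x:F(x)\le u\}$ and $G^{-1}$ the analogous quantile function of $Y$ (CDF $G$), $X$ is smaller than $Y$ in the dispersive order, $X\le_d Y$, iff $F^{-1}(v)-F^{-1}(u)\le G^{-1}(v)-G^{-1}(u)$ whenever $0<u\le v<1$. *)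

From HB Require Import structures.
From mathcomp Require Import all_boot all_order all_algebra.
From mathcomp Require Import all_classical all_reals all_analysis.
Set Implicit Arguments. Unset Strict Implicit. Unset Printing Implicit Defensive.
Import Order.TTheory GRing.Theory Num.Theory.
Import numFieldNormedType.Exports.
Local Open Scope classical_set_scope.
Local Open Scope ring_scope.

Section Defs.
Context {R : realType}.

(* distortion function: increasing q : [0,1] -> [0,1], q 0 = 0, q 1 = 1
   (only its values on [0,1] are ever used) *)
Definition distortion (q : R -> R) : Prop :=
  [/\ q 0 = 0, q 1 = 1,
      {in `[0, 1]&, {homo q : x y / x <= y}} &
      (forall u, 0 <= u <= 1 -> 0 <= q u <= 1)].

Definition cdfR d (T : measurableType d) (P : probability T R)
  (X : {RV P >-> R}) (x : R) : R := fine (cdf X x).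

Definition lend (F : R -> R) : \bar R :=
  ereal_inf [set x%:E | x in [set x : R | 0 < F x]].
Definition rend (F : R -> R) : \bar R :=
  ereal_sup [set x%:E | x in [set x : R | 0 < 1 - F x]].

Definition dgini_cdf (q1 q2 : R -> R) (F : R -> R) : \bar R :=
  (\int[lebesgue_measure]_(x in [set x : R | (lend F < x%:E)%E && (x%:E < rend F)%E])
     (q1 (F x) * q2 (1 - F x))%:E)%E.

Definition dgini d (T : measurableType d) (P : probability T R)
  (q1 q2 : R -> R) (X : {RV P >-> R}) : \bar R :=
  dgini_cdf q1 q2 (cdfR X).

Definition quantile (F : R -> R) (u : R) : R := sup [set x : R | F x <= u].

Definition dispersive d1 (T1 : measurableType d1) (P1 : probability T1 R)
  (X : {RV P1 >-> R}) d2 (T2 : measurableType d2) (P2 : probability T2 R)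
  (Y : {RV P2 >-> R}) : Prop :=
  forall u v : R, 0 < u -> u <= v -> v < 1 ->
    quantile (cdfR X) v - quantile (cdfR X) u <=
    quantile (cdfR Y) v - quantile (cdfR Y) u.

Definition rv_support d (T : measurableType d) (P : probability T R)
  (X : {RV P >-> R}) : set R :=
  [set x : R | forall e : R, 0 < e -> (0 < P (X @^-1` `]((x - e)%R), ((x + e)%R)[))%E].

Definition degenerate d (T : measurableType d) (P : probability T R)
  (X : {RV P >-> R}) : Prop :=
  exists c : R, P [set w | X w = c] = 1%E.

End Defs.

From HB Require Import structures.
From mathcomp Require Import all_boot all_order all_algebra.
From mathcomp Require Import all_classical all_reals all_analysis.
From mathcomp Require Import lra measurable_realfun.
Import Order.TTheory GRing.Theory Num.Theory.
Import numFieldNormedType.Exports.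
Local Open Scope classical_set_scope.
Local Open Scope ring_scope.

(* One comparison principle gives all five properties.  Let F, G be
   distribution functions and let phi stretch distances by a factor at least
   c > 0 on the interval (l, r) of F while transporting F to G there, i.e.
   G (phi x) = F x.  The image under phi of Lebesgue measure on (l, r), scaled
   by c, gives every interval ]a, b] mass at most b - a, so it is dominated by
   Lebesgue measure, and the change of variables y = phi x yields
   c * Gini(F) <= Gini(G).  Translations (c = 1) and dilations by gamma
   (c = gamma and c = 1/gamma) are such maps in both directions; if X <=_d Y
   then x |-> x + G^-1 (F x) - F^-1 (F x) is one with c = 1.  For a degenerate
   X the interval (l, r) is empty, and the integrand is always nonnegative. *)

Section measure_comparison.
Local Open Scope ereal_scope.
Import HBNNSimple.

Lemma ge0_le_measure_integral_in d (T : measurableType d) {R : realType}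
    (m1 m2 : {measure set T -> \bar R}) (D : set T) (f : T -> \bar R) :
  (forall S, measurable S -> S `<=` D -> m1 S <= m2 S) ->
  (forall x, D x -> 0 <= f x) ->
  \int[m1]_(x in D) f x <= \int[m2]_(x in D) f x.
Proof.
move=> m12 f0; rewrite !ge0_integralE//.
apply: ge_ereal_sup => _ [h hf <-].
apply: le_trans (ereal_sup_ubound _); last by exists h.
rewrite !sintegralE; apply: lee_fsum => // r [t _ <-].
have [ht0|ht0] := leP (h t) 0%R.
  have -> : h t = 0%R by apply/eqP; rewrite eq_le ht0 fun_ge0.
  by rewrite !mul0e.
apply: lee_wpmul2l; first by rewrite lee_fin ltW.
apply: m12; first exact: measurable_funPTI.
move=> s /= hs; have := hf s; rewrite /patch; case: ifPn => [/set_mem//|_].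
by rewrite hs lee_fin leNgt ht0.
Qed.

Lemma le_lebesgue_measure_itv {R : realType}
    (mu : {measure set (measurableTypeR R) -> \bar R}) :
  (forall a b : R, (a < b)%R -> mu `]a, b]%classic <= (b - a)%:E) ->
  forall S, measurable S -> mu S <= lebesgue_measure S.
Proof.
move=> mu_itv S mS.
rewrite /lebesgue_measure /lebesgue_stieltjes_measure /measure_extension /=.
apply: le_ereal_inf_tmp => _ [C [mC SC] <-].
have mC' k : measurable (C k : set (measurableTypeR R)).
  by have [[a b] _ <-] := mC k; exact: measurable_itv.
apply: le_trans (measure_sigma_subadditive _ mC' _ SC) _ => //.
apply: lee_nneseries => k _ //; have [[a b] _ <-] := mC k.
rewrite wlength_itv /=; have [ab|ba] := ltP a b.
  by rewrite lte_fin ab -EFinB; exact: mu_itv.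
rewrite set_itv_ge ?measure0 ?lte_fin ?ltNge ?ba//.
by rewrite bnd_simp negbK.
Qed.

End measure_comparison.

Lemma nondecreasing_in_measurable {R : realType} [A : set R] [f : R -> R] :
  is_interval A -> {in A &, nondecreasing_fun f} -> measurable_fun A f.
Proof.
move=> A_itv f_nd.
apply: (measurability (@RGenCInfty.G R)) => [|/= _ [_] [r] -> <-].
  exact: RGenCInfty.measurableE.
apply: is_interval_measurable => s t [As /=] + [At /=] + u /andP[su ut].
rewrite !in_itv/= !andbT => fs ft.
have Au : A u by apply: (A_itv s t As At u); rewrite su ut.
by split => //; apply: le_trans fs _; apply: f_nd => //; exact: mem_set.
Qed.

Section expanding_map.
Context {R : realType} (A : set R) (phi : R -> R) (c : R).
Hypotheses (A_itv : is_interval A) (c_gt0 : 0 < c).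
Hypothesis phi_expanding :
  {in A &, forall x y, x <= y -> c * (y - x) <= phi y - phi x}.

Lemma expanding_nondecreasing : {in A &, nondecreasing_fun phi}.
Proof.
move=> x y Ax Ay xy; rewrite -subr_ge0.
apply: le_trans (phi_expanding x y Ax Ay xy).
by rewrite mulr_ge0 ?subr_ge0 // ltW.
Qed.

Let mA : measurable A := is_interval_measurable A_itv.

Let mphi : measurable_fun A phi :=
  nondecreasing_in_measurable A_itv expanding_nondecreasing.

Lemma expanding_preimage_itv (a b : R) : a < b ->
  (c%:E * lebesgue_measure (A `&` phi @^-1` `]a, b]%classic) <= (b - a)%:E)%E.
Proof.
move=> ab; set E := A `&` _.
have mE : measurable E by apply: mphi => //; exact: measurable_itv.
pose L := (b - a) / c.
have L_ge0 : 0 <= L by rewrite divr_ge0 ?subr_ge0 ?ltW.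
have cL : c * L = b - a by rewrite /L mulrCA mulfV ?mulr1 ?gt_eqF.
have [->|/set0P[x0 Ex0]] := eqVneq E set0.
  by rewrite measure0 mule0 lee_fin subr_ge0 ltW.
have E_diam x y : E x -> E y -> x - y <= L.
  move=> [Ax /=]; rewrite in_itv/= => /andP[ax xb].
  move=> [Ay /=]; rewrite in_itv/= => /andP[ay yb].
  have [xy|yx] := leP x y; first by apply: le_trans L_ge0; rewrite subr_le0.
  rewrite -(ler_pM2l c_gt0) cL.
  apply: le_trans (phi_expanding y x (mem_set Ay) (mem_set Ax) (ltW yx)) _.
  exact: lerB xb (ltW ay).
have E_sub : E `<=` `[inf E, inf E + L]%classic.
  have E_lb : has_lbound E.
    by exists (x0 - L) => y Ey; rewrite lerBlDr addrC -lerBlDr E_diam.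
  move=> y Ey /=; rewrite in_itv/= ge_inf//= -lerBlDr.
  apply: lb_le_inf; first by exists x0.
  by move=> z Ez; rewrite lerBlDr addrC -lerBlDr E_diam.
apply: (@le_trans _ _
    (c%:E * lebesgue_measure `[inf E, (inf E + L)%R]%classic)%E).
  by rewrite lee_pmul2l ?lte_fin// le_measure// inE.
rewrite lebesgue_measure_itv/= lte_fin; case: ltP => _.
  by rewrite -EFinB addrAC subrr add0r -EFinM cL.
by rewrite mule0 lee_fin subr_ge0 ltW.
Qed.

Let phiA : R -> measurableTypeR R := phi \_ A.

Let mphiA : measurable_fun setT phiA := (measurable_restrictT _ mA).1 mphi.

Let phiAE x : A x -> phiA x = phi x.
Proof. by move=> Ax; rewrite /phiA patchE mem_set. Qed.

Let restr_preimageE (Y : set R) : phiA @^-1` Y `&` A = A `&` phi @^-1` Y.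
Proof. by rewrite setIC; apply/seteqP; split => x [Ax]; rewrite /= phiAE. Qed.

Let c_ge0 : 0 <= c := ltW c_gt0.

(* The measure instance of a pushforward depends on a proof of measurability,
   which [pose] abstracts: below, [mu mphiA] is the image of Lebesgue measure
   on A under phi. *)

Lemma expanding_preimage_le (S : set R) : measurable S ->
  (c%:E * lebesgue_measure (A `&` phi @^-1` S) <= lebesgue_measure S)%E.
Proof.
pose mu : {measure set (measurableTypeR R) -> \bar R} :=
  pushforward (mrestr lebesgue_measure mA) phiA.
pose nu : {measure set (measurableTypeR R) -> \bar R} :=
  mscale (NngNum c_ge0) (mu mphiA).
have nuE Y : nu Y = (c%:E * lebesgue_measure (A `&` phi @^-1` Y))%E.
  by rewrite /= /mscale /mu /= /pushforward /mrestr restr_preimageE.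
rewrite -nuE; apply: le_lebesgue_measure_itv => a b ab.
by rewrite nuE; exact: expanding_preimage_itv.
Qed.

Lemma ge0_integral_expanding (B : set R) (g : R -> \bar R) :
  measurable B -> measurable_fun B g -> (forall y, B y -> 0 <= g y)%E ->
  (forall x, A x -> B (phi x)) ->
  (c%:E * \int[lebesgue_measure]_(x in A) g (phi x) <=
   \int[lebesgue_measure]_(y in B) g y)%E.
Proof.
move=> mB mg g_ge0 phiAB.
pose lebA := mrestr lebesgue_measure mA.
pose mu : {measure set (measurableTypeR R) -> \bar R} := pushforward lebA phiA.
pose nu : {measure set (measurableTypeR R) -> \bar R} :=
  mscale (NngNum c_ge0) (mu mphiA).
have gphi_ge0 x : A x -> (0 <= g (phiA x))%E.
  by move=> Ax; rewrite phiAE//; exact/g_ge0/phiAB.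
have A_sub : A `<=` phiA @^-1` B.
  by move=> x Ax; rewrite /= phiAE//; exact: phiAB.
have mAB : measurable (phiA @^-1` B).
  by rewrite -[_ @^-1` _]setTI; exact: (mphiA measurableT).
have mgphiA : measurable_fun (phiA @^-1` B) (g \o phiA).
  apply: measurable_comp mB _ mg (measurable_funS _ _ mphiA) => //.
  by move=> _ [x + <-].
under eq_integral => x /[1!inE] Ax do rewrite -phiAE//.
apply: (@le_trans _ _ (c%:E * \int[lebA]_(x in phiA @^-1` B) (g \o phiA) x)%E).
  rewrite lee_pmul2l ?lte_fin//.
  apply: (@le_trans _ _ (\int[lebA]_(x in A) g (phiA x))%E).
    apply: ge0_le_measure_integral_in => [S mS SA|//].
    by rewrite /= /mrestr setIidl.
  by apply: ge0_subset_integral => // x /g_ge0.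
apply: (@le_trans _ _ (\int[nu]_(y in B) g y)%E).
  rewrite ge0_integral_mscale//= /mu ge0_integral_pushforward//.
  by move=> y /[1!inE] /g_ge0.
apply: ge0_le_measure_integral_in => [S mS _|//].
rewrite /= /mscale /mu /= /pushforward /mrestr restr_preimageE.
exact: expanding_preimage_le.
Qed.

End expanding_map.

Section gini_domain.
Context {R : realType}.
Implicit Types (F G phi : R -> R) (x : R).

Definition gini_dom F : set R :=
  [set x | (lend F < x%:E)%E && (x%:E < rend F)%E].

Lemma dgini_cdfE (q1 q2 F : R -> R) : dgini_cdf q1 q2 F =
  (\int[lebesgue_measure]_(x in gini_dom F) (q1 (F x) * q2 (1 - F x))%:E)%E.
Proof. by []. Qed.

Lemma gini_dom_interval F : is_interval (gini_dom F).
Proof.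
move=> x y /andP[lx _] /andP[_ yr] z /andP[xz zy]; apply/andP; split.
  by apply: lt_le_trans lx _; rewrite lee_fin.
by apply: le_lt_trans yr; rewrite lee_fin.
Qed.

Lemma gini_dom_gt0 {F x} : nondecreasing_fun F -> gini_dom F x -> 0 < F x.
Proof.
move=> F_nd /andP[lx _]; have [_ [z /= Fz_gt0 <-]] := ereal_inf_lt lx.
by rewrite lte_fin => /ltW/F_nd; exact: lt_le_trans.
Qed.

Lemma gini_dom_lt1 {F x} : nondecreasing_fun F -> gini_dom F x -> F x < 1.
Proof.
move=> F_nd /andP[_ xr]; have [_ [z /= Fz_lt1 <-]] := ereal_sup_gt xr.
rewrite subr_gt0 in Fz_lt1.
by rewrite lte_fin => /ltW/F_nd /le_lt_trans; apply.
Qed.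

Lemma gini_dom_exists_lt {F x} :
  gini_dom F x -> exists2 y, gini_dom F y & y < x.
Proof.
move=> /andP[lx xr]; have [_ [z /= Fz_gt0 <-]] := ereal_inf_lt lx.
rewrite lte_fin => zx; exists ((z + x) / 2); last lra.
apply/andP; split; last by apply: le_lt_trans xr; rewrite lee_fin; lra.
apply: (@le_lt_trans _ _ z%:E); first by apply: ereal_inf_lbound; exists z.
by rewrite lte_fin; lra.
Qed.

Lemma gini_dom_exists_gt {F x} :
  gini_dom F x -> exists2 y, gini_dom F y & x < y.
Proof.
move=> /andP[lx xr]; have [_ [z /= Fz_lt1 <-]] := ereal_sup_gt xr.
rewrite lte_fin => xz; exists ((z + x) / 2); last lra.
apply/andP; split; first by apply: lt_le_trans lx _; rewrite lee_fin; lra.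
apply: (@lt_le_trans _ _ z%:E); first by rewrite lte_fin; lra.
by apply: ereal_sup_ubound; exists z.
Qed.

Lemma expanding_gini_dom F G phi (c : R) :
  nondecreasing_fun F -> 0 < c ->
  {in gini_dom F &, forall x y, x <= y -> c * (y - x) <= phi y - phi x} ->
  {in gini_dom F, forall x, G (phi x) = F x} ->
  forall x, gini_dom F x -> gini_dom G (phi x).
Proof.
move=> F_nd c_gt0 phi_expanding GphiF x Fx.
have phi_lt y z : gini_dom F y -> gini_dom F z -> y < z -> phi y < phi z.
  move=> Fy Fz yz; rewrite -subr_gt0.
  apply: lt_le_trans (phi_expanding y z (mem_set Fy) (mem_set Fz) (ltW yz)).
  by rewrite mulr_gt0// subr_gt0.
have [y Fy yx] := gini_dom_exists_lt Fx.
have [z Fz xz] := gini_dom_exists_gt Fx.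
apply/andP; split.
  apply: (@le_lt_trans _ _ (phi y)%:E); last by rewrite lte_fin phi_lt.
  apply: ereal_inf_lbound; exists (phi y) => //=.
  by rewrite GphiF ?inE// gini_dom_gt0.
apply: (@lt_le_trans _ _ (phi z)%:E); first by rewrite lte_fin phi_lt.
apply: ereal_sup_ubound; exists (phi z) => //=.
by rewrite GphiF ?inE// subr_gt0 gini_dom_lt1.
Qed.

End gini_domain.

Section distorted_gini.
Context {R : realType} (q1 q2 : R -> R).
Hypotheses (q1_dist : distortion q1) (q2_dist : distortion q2).
Implicit Types (F G phi : R -> R).

Lemma gini_integrand_ge0 (u : R) : 0 <= u <= 1 -> 0 <= q1 u * q2 (1 - u).
Proof.
case: q1_dist q2_dist => _ _ _ q1_01 [_ _ _ q2_01] u01.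
have /andP[q1u_ge0 _] := q1_01 u u01.
have /andP[q2u_ge0 _] : 0 <= q2 (1 - u) <= 1 by apply: q2_01; lra.
exact: mulr_ge0.
Qed.

Lemma measurable_gini_integrand G :
  nondecreasing_fun G -> (forall x, 0 <= G x <= 1) ->
  measurable_fun setT (fun x => (q1 (G x) * q2 (1 - G x))%:E).
Proof.
case: q1_dist q2_dist => _ _ q1_nd _ [_ _ q2_nd _] G_nd G01.
have G_itv x : G x \in `[0, 1] by rewrite in_itv/= G01.
have G'_itv x : 1 - G x \in `[0, 1].
  by have := G01 x; rewrite in_itv/=; lra.
apply/measurable_EFinP; apply: measurable_funM.
  by apply: nondecreasing_measurable => // x y /G_nd; exact: q1_nd.
apply: nonincreasing_measurable => // x y /G_nd Gxy.
by apply: q2_nd => //; rewrite lerB.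
Qed.

Lemma dgini_cdf_expanding F G phi (c : R) :
  nondecreasing_fun F -> nondecreasing_fun G -> (forall x, 0 <= G x <= 1) ->
  0 < c ->
  {in gini_dom F &, forall x y, x <= y -> c * (y - x) <= phi y - phi x} ->
  {in gini_dom F, forall x, G (phi x) = F x} ->
  (c%:E * dgini_cdf q1 q2 F <= dgini_cdf q1 q2 G)%E.
Proof.
move=> F_nd G_nd G01 c_gt0 phi_expanding GphiF.
rewrite !dgini_cdfE.
under eq_integral => x /[1!inE] Fx do rewrite -GphiF ?inE//.
apply: (ge0_integral_expanding _ _ _ (gini_dom_interval F) c_gt0 phi_expanding _
  (fun y => (q1 (G y) * q2 (1 - G y))%:E)).
- exact: is_interval_measurable (gini_dom_interval G).
- by apply: measurable_funTS; exact: measurable_gini_integrand.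
- by move=> y _; rewrite lee_fin gini_integrand_ge0.
- exact: expanding_gini_dom phi_expanding GphiF.
Qed.

Lemma dgini_cdf_shift F (delta : R) :
  nondecreasing_fun F -> (forall x, 0 <= F x <= 1) ->
  dgini_cdf q1 q2 (fun x => F (x - delta)) = dgini_cdf q1 q2 F.
Proof.
move=> F_nd F01.
have Fd_nd : nondecreasing_fun (fun x => F (x - delta)).
  by move=> x y xy; apply: F_nd; rewrite lerD2r.
apply/le_anti/andP; split; rewrite -[leLHS]mul1e.
- apply: (dgini_cdf_expanding _ _ (fun x => x - delta)) => //.
  by move=> x y _ _ _; lra.
- apply: (dgini_cdf_expanding _ _ (fun x => x + delta)) => //.
  + by move=> x y _ _ _; lra.
  + by move=> x _; rewrite addrK.
Qed.

Lemma dgini_cdf_scale F (gamma : R) : 0 < gamma ->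
  nondecreasing_fun F -> (forall x, 0 <= F x <= 1) ->
  dgini_cdf q1 q2 (fun x => F (x / gamma)) = (gamma%:E * dgini_cdf q1 q2 F)%E.
Proof.
move=> gamma_gt0 F_nd F01.
have Fg_nd : nondecreasing_fun (fun x => F (x / gamma)).
  by move=> x y xy; apply: F_nd; rewrite ler_pM2r ?invr_gt0.
apply/le_anti/andP; split; last first.
  apply: (dgini_cdf_expanding _ _ (fun x => gamma * x)) => //.
  + by move=> x y _ _ _; rewrite mulrBr.
  + by move=> x _; rewrite mulrAC mulfV ?gt_eqF ?mul1r.
rewrite -(@lee_pmul2l _ gamma^-1%:E) ?lte_fin ?invr_gt0// muleA -EFinM.
rewrite mulVf ?gt_eqF// mul1e.
apply: (dgini_cdf_expanding _ _ (fun x => x / gamma)); rewrite ?invr_gt0//.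
by move=> x y _ _ _; rewrite -mulrBl mulrC.
Qed.

Lemma dgini_cdf_ge0 F : (forall x, 0 <= F x <= 1) -> (0 <= dgini_cdf q1 q2 F)%E.
Proof.
by move=> F01; apply: integral_ge0 => x _; rewrite lee_fin gini_integrand_ge0.
Qed.

Lemma dgini_cdf_eq0 F : nondecreasing_fun F -> (forall x, F x = 0 \/ F x = 1) ->
  dgini_cdf q1 q2 F = 0%E.
Proof.
move=> F_nd F01; rewrite dgini_cdfE (_ : gini_dom F = set0) ?integral_set0//.
apply/seteqP; split => // x Fx.
move: (gini_dom_gt0 F_nd Fx) (gini_dom_lt1 F_nd Fx).
by case: (F01 x) => ->; lra.
Qed.

End distorted_gini.

Section quantile.
Context {R : realType} (F : R -> R).
Hypotheses (F_nd : nondecreasing_fun F) (F_rc : right_continuous F).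
Hypothesis F_cvgNy : F x @[x --> -oo] --> 0.
Hypothesis F_cvgy : F x @[x --> +oo] --> (1 : R).

Let quantile_set_ub u : u < 1 -> has_ubound [set x | F x <= u].
Proof.
move=> u_lt1; have [z [_ uF]] := cvgr_gt _ F_cvgy u u_lt1.
by exists z => x /= Fxu; rewrite leNgt; apply/negP => /uF; rewrite ltNge Fxu.
Qed.

Let quantile_set_neq0 u : 0 < u -> [set x | F x <= u] !=set0.
Proof.
move=> u_gt0; have [z [_ Fu]] := cvgr_lt _ F_cvgNy u u_gt0.
by exists (z - 1); apply/ltW/Fu; rewrite ltrBlDr ltrDl ltr01.
Qed.

Lemma le_quantile u x : u < 1 -> F x <= u -> x <= quantile F u.
Proof. by move=> u_lt1 Fxu; apply: ub_le_sup => //; exact: quantile_set_ub. Qed.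

Lemma quantile_le u x : 0 < u -> u < F x -> quantile F u <= x.
Proof.
move=> u_gt0 uFx; apply: ge_sup; first exact: quantile_set_neq0.
move=> z /= Fzu; rewrite leNgt; apply/negP => xz.
by have := lt_le_trans uFx (F_nd _ _ (ltW xz)); rewrite ltNge Fzu.
Qed.

Lemma le_cdf_quantile u : u < 1 -> u <= F (quantile F u).
Proof.
move=> u_lt1; apply: (closed_cvg _ (@closed_ge _ u) _ _ (F_rc _)).
near=> z; rewrite /= leNgt; apply/negP => Fzu.
have := le_quantile _ _ u_lt1 (ltW Fzu); rewrite leNgt; apply/negP/negPn.
by near: z; exact: nbhs_right_gt.
Unshelve. all: by end_near. Qed.

End quantile.

Section cdfR.
Context {d} {T : measurableType d} {R : realType} {P : probability T R}.
Implicit Types X : {RV P >-> R}.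

Lemma cdfRE X x : (cdfR X x)%:E = cdf X x.
Proof.
by rewrite fineK// ge0_fin_numE ?cdf_ge0// (le_lt_trans (cdf_le1 X x)) ?ltry.
Qed.

Lemma cdfR_ge0_le1 X x : 0 <= cdfR X x <= 1.
Proof. by rewrite -!lee_fin cdfRE cdf_ge0 cdf_le1. Qed.

Lemma cdfR_nondecreasing X : nondecreasing_fun (cdfR X).
Proof. by move=> x y xy; rewrite -lee_fin !cdfRE cdf_nondecreasing. Qed.

Lemma cdfR_right_continuous X : right_continuous (cdfR X).
Proof.
by move=> x; apply: fine_cvg; rewrite cdfRE; exact: cdf_right_continuous.
Qed.

Lemma cvg_cdfRNy0 X : cdfR X x @[x --> -oo] --> 0.
Proof. exact/fine_cvg/cvg_cdfNy0. Qed.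

Lemma cvg_cdfRy1 X : cdfR X x @[x --> +oo] --> (1 : R).
Proof. exact/fine_cvg/cvg_cdfy1. Qed.

Lemma cdfR_shift {X Xd : {RV P >-> R}} {delta : R} :
  (forall w, Xd w = X w + delta) ->
  cdfR Xd = fun x => cdfR X (x - delta).
Proof.
move=> XdE; apply/funext => x; congr (fine (P _)).
by apply/seteqP; split => w /=; rewrite !in_itv/= XdE; lra.
Qed.

Lemma cdfR_scale {X Xg : {RV P >-> R}} {gamma : R} : 0 < gamma ->
  (forall w, Xg w = gamma * X w) -> cdfR Xg = fun x => cdfR X (x / gamma).
Proof.
move=> gamma_gt0 XgE; apply/funext => x; congr (fine (P _)).
by apply/seteqP; split => w /=; rewrite !in_itv/= XgE ler_pdivlMr// mulrC.
Qed.

Lemma degenerate_cdfR X :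
  degenerate X -> forall x, cdfR X x = 0 \/ cdfR X x = 1.
Proof.
move=> [c Xc] x; have /andP[Fx_ge0 Fx_le1] := cdfR_ge0_le1 X x.
have mXc : measurable (X @^-1` [set c]) by exact: measurable_funPTI.
have mXx : measurable (X @^-1` `]-oo, x]%classic) by exact: measurable_funPTI.
have FxE : P (X @^-1` `]-oo, x]%classic) = (cdfR X x)%:E by rewrite cdfRE.
have [xc|cx] := ltP x c; [left|right].
  have disj : X @^-1` `]-oo, x]%classic `&` X @^-1` [set c] = set0.
    apply/seteqP; split => // w [/=]; rewrite in_itv/= => + Xwc.
    by rewrite Xwc leNgt xc.
  have PU : P (X @^-1` `]-oo, x]%classic `|` X @^-1` [set c]) =
      (P (X @^-1` `]-oo, x]%classic) + P (X @^-1` [set c]))%E.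
    exact: measureU.
  have := probability_le1 P (measurableU _ _ mXx mXc).
  by rewrite PU FxE Xc -EFinD lee_fin; lra.
have : (P (X @^-1` [set c]) <= P (X @^-1` `]-oo, x]%classic))%E.
  by apply: le_measure; rewrite ?inE// => w /= ->; rewrite in_itv/= cx.
by rewrite FxE Xc lee_fin; lra.
Qed.

End cdfR.

Section dispersive_order.
Context d1 (T1 : measurableType d1) d2 (T2 : measurableType d2) {R : realType}.
Context (P1 : probability T1 R) (P2 : probability T2 R).
Context (X : {RV P1 >-> R}) (Y : {RV P2 >-> R}).
Hypothesis XY : dispersive X Y.

Local Notation FX := (cdfR X).
Local Notation FY := (cdfR Y).
Local Notation QX := (quantile (cdfR X)).
Local Notation QY := (quantile (cdfR Y)).

Let FX_nd := cdfR_nondecreasing X.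
Let FY_nd := cdfR_nondecreasing Y.
Let QX_le := quantile_le _ FX_nd (cvg_cdfRNy0 X).
Let QY_le := quantile_le _ FY_nd (cvg_cdfRNy0 Y).
Let le_FX_QX := le_cdf_quantile _ (cdfR_right_continuous X) (cvg_cdfRy1 X).
Let le_FY_QY := le_cdf_quantile _ (cdfR_right_continuous Y) (cvg_cdfRy1 Y).

Definition dispersive_transport x := x + QY (FX x) - QX (FX x).

Lemma dispersive_transport_expanding : {in gini_dom FX &, forall x y,
  x <= y -> 1 * (y - x) <= dispersive_transport y - dispersive_transport x}.
Proof.
move=> x y /[!inE] Fx Fy xy.
have := XY _ _ (gini_dom_gt0 FX_nd Fx) (FX_nd _ _ xy) (gini_dom_lt1 FX_nd Fy).
by rewrite /dispersive_transport; lra.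
Qed.

Lemma cdfR_dispersive_transport :
  {in gini_dom FX, forall x, FY (dispersive_transport x) = FX x}.
Proof.
move=> x /[!inE] Fx; set u := FX x; set y := dispersive_transport x.
have yE : y = x + QY u - QX u by [].
have u_gt0 : 0 < u := gini_dom_gt0 FX_nd Fx.
have u_lt1 : u < 1 := gini_dom_lt1 FX_nd Fx.
have /andP[Fy_ge0 Fy_le1] := cdfR_ge0_le1 Y y.
apply/le_anti/andP; split; rewrite leNgt; apply/negP => Fy_u.
- pose w := (u + FY y) / 2.
  have [u_lt_w w_lt_Fy w_lt1] : [/\ u < w, w < FY y & w < 1].
    by rewrite /w; split; lra.
  have QYw_le : QY w <= y by apply: QY_le => //; exact: lt_trans u_lt_w.
  have QXw_le : QX w <= x.
    by have := XY _ _ u_gt0 (ltW u_lt_w) w_lt1; lra.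
  have := le_FX_QX w w_lt1; have := FX_nd _ _ QXw_le; rewrite -/u; lra.
- pose v := (FY y + u) / 2.
  have [v_gt0 v_lt_u v_gt_Fy] : [/\ 0 < v, v < u & FY y < v].
    by rewrite /v; split; lra.
  have QXv_le : QX v <= x by exact: QX_le.
  have QYv_le : QY v <= y.
    by have := XY _ _ v_gt0 (ltW v_lt_u) u_lt1; lra.
  have := le_FY_QY v (lt_trans v_lt_u u_lt1); have := FY_nd _ _ QYv_le; lra.
Qed.

Lemma dgini_dispersive_le (q1 q2 : R -> R) :
  distortion q1 -> distortion q2 -> (dgini q1 q2 X <= dgini q1 q2 Y)%E.
Proof.
move=> q1_dist q2_dist; rewrite /dgini -[leLHS]mul1e.
apply: (dgini_cdf_expanding _ _ q1_dist q2_dist _ _ dispersive_transport) => //.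
- exact: cdfR_ge0_le1.
- exact: dispersive_transport_expanding.
- exact: cdfR_dispersive_transport.
Qed.

End dispersive_order.

Theorem theorem2 (R : realType)
  (d1 : measure_display) (T1 : measurableType d1) (P1 : probability T1 R)
  (X : {RV P1 >-> R})
  (d2 : measure_display) (T2 : measurableType d2) (P2 : probability T2 R)
  (Y : {RV P2 >-> R})
  (q1 q2 : R -> R) :
  distortion q1 -> distortion q2 ->
  rv_support X = rv_support Y ->
  dgini q1 q2 X \is a fin_num -> dgini q1 q2 Y \is a fin_num ->
  [/\ (* 1. location invariance *)
      (forall (delta : R) (Xd : {RV P1 >-> R}),
         (forall w, Xd w = X w + delta) -> dgini q1 q2 Xd = dgini q1 q2 X),
      (* 2. positive homogeneity *)
      (forall (gamma : R) (Xg : {RV P1 >-> R}), 0 < gamma ->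
         (forall w, Xg w = gamma * X w) ->
         dgini q1 q2 Xg = (gamma%:E * dgini q1 q2 X)%E),
      (* 3. degenerate variables *)
      (degenerate X -> dgini q1 q2 X = 0%E),
      (* 4. nonnegativity *)
      (0 <= dgini q1 q2 X)%E &
      (* 5. monotonicity w.r.t. the dispersive order *)
      (dispersive X Y -> (dgini q1 q2 X <= dgini q1 q2 Y)%E)].
Proof.
move=> q1_dist q2_dist _ _ _.
have FX_nd := cdfR_nondecreasing X; have FX01 := cdfR_ge0_le1 X.
split.
- move=> delta Xd /cdfR_shift XdE; rewrite /dgini XdE.
  exact: dgini_cdf_shift.
- move=> gamma Xg gamma_gt0 /(cdfR_scale gamma_gt0) XgE; rewrite /dgini XgE.
  exact: dgini_cdf_scale.
- by move=> /degenerate_cdfR; exact: dgini_cdf_eq0.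
- exact: dgini_cdf_ge0.
- by move=> XY; exact: dgini_dispersive_le.
Qed.
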